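(* Let $\Lambda=\operatorname{diag}(\lambda_1,\dots,\lambda_n)$, $\bar\mu\in\mathbb{R}^n$, let $\mathcal{C}$ be a constant positive definite $n\times n$ matrix, and take $a(x)=\Lambda(\bar\mu-x)$ on $\mathcal{U}=\mathbb{R}^n$ (multivariate Ornstein–Uhlenbeck model), with $\kappa\neq-1$ a real constant. Then there is $T_0>0$ such that for $T\le T_0$ the Hamilton–Jacobi equation $$\partial_tS^0+\tfrac{\kappa+1}{2}(\nabla S^0)^T\mathcal{C}\nabla S^0+(\kappa+1)a^T\nabla S^0+\tfrac{\kappa}{2}a^T\mathcal{C}^{-1}a=0,\qquad S^0(T,\cdot)=0,$$ has a solution $S^0(t,x)$ that is a quadratic polynomial in $x$ with $t$-dependent coefficients, and setting $S^1(t)=\frac12\int_t^T\operatorname{tr}\big(\mathcal{C}\nabla^2S^0(s,\cdot)\big)ds$ (which is independent of $x$), the function $S=S^0+S^1$ solves exactly $$\partial_tS+(\kappa+1)a^T\nabla S+\tfrac{\kappa+1}{2}(\nabla S)^T\mathcal{C}\nabla S+\tfrac{\kappa}{2}a^T\mathcal{C}^{-1}a+\tfrac12\operatorname{tr}(\mathcal{C}\nabla^2S)=0,\qquad S(T,\cdot)=0.$$ Consequently all higher WKB corrections $S^j$, $j\ge2$, vanish and the optimal control is $\varphi^*=\frac{1}{A_U(w)}\big(\mathcal{C}^{-1}\Lambda(\bar\mu-x)+\nabla S^0(t,x)\big)$.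
   Context: $\Gamma=e^{S}$ is the function in the representation $J(t,x,w)=\Gamma(t,x)U(w)$ of the value function; $A_U(w)=-U''(w)/U'(w)$; $\nabla,\nabla^2$ are gradient and Hessian in $x$. *)

(* classical reals. Vectors of R^n are functions nat -> R
   (only indices < n matter); n x n matrices are nat -> nat -> R. *)
From Stdlib Require Import Reals Lra Lia ClassicalEpsilon.
Open Scope R_scope.

Definition vec := nat -> R.
Definition mat := nat -> nat -> R.

Fixpoint fsum (n : nat) (f : nat -> R) : R :=
  match n with O => 0 | S k => fsum k f + f k end.

Definition dot (n : nat) (u v : vec) : R := fsum n (fun i => u i * v i).
Definition bilin (n : nat) (M : mat) (u v : vec) : R :=
  fsum n (fun i => fsum n (fun j => u i * M i j * v j)).
Definition trmul (n : nat) (A B : mat) : R :=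
  fsum n (fun i => fsum n (fun j => A i j * B j i)).

Definition symmetric (n : nat) (C : mat) : Prop :=
  forall i j, (i < n)%nat -> (j < n)%nat -> C i j = C j i.
Definition posdef (n : nat) (C : mat) : Prop :=
  symmetric n C /\
  forall v : vec, (exists i, (i < n)%nat /\ v i <> 0) -> bilin n C v v > 0.
Definition is_inverse (n : nat) (C Cinv : mat) : Prop :=
  forall i j, (i < n)%nat -> (j < n)%nat ->
    fsum n (fun k => C i k * Cinv k j) = (if Nat.eqb i j then 1 else 0) /\
    fsum n (fun k => Cinv i k * C k j) = (if Nat.eqb i j then 1 else 0).

Definition has_deriv (g : R -> R) (x : R) : Prop := exists l, derivable_pt_lim g x l.
Definition deriv (g : R -> R) (x : R) : R :=
  epsilon (inhabits 0) (fun l => derivable_pt_lim g x l).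

Definition upd (x : vec) (i : nat) (h : R) : vec :=
  fun j => if Nat.eqb j i then h else x j.

Definition dtime (S : R -> vec -> R) (t : R) (x : vec) : R :=
  deriv (fun s => S s x) t.
Definition grad (S : R -> vec -> R) (t : R) (x : vec) : vec :=
  fun i => deriv (fun h => S t (upd x i h)) (x i).
Definition hess (S : R -> vec -> R) (t : R) (x : vec) : mat :=
  fun i j => deriv (fun h => grad S t (upd x j h) i) (x j).

Definition regular (n : nat) (T : R) (S : R -> vec -> R) : Prop :=
  forall t x, 0 <= t <= T ->
    has_deriv (fun s => S s x) t /\
    forall i j, (i < n)%nat -> (j < n)%nat ->
      has_deriv (fun h => S t (upd x i h)) (x i) /\
      has_deriv (fun h => grad S t (upd x j h) i) (x j).

Definition quadratic_in_x (n : nat) (S : R -> vec -> R) : Prop :=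
  exists (A : R -> mat) (b : R -> vec) (c : R -> R),
    forall t x, S t x = bilin n (A t) x x + dot n (b t) x + c t.

(* drift a(x) = Lambda (mubar - x), Lambda = diag(lam) *)
Definition drift (lam mu : vec) (x : vec) : vec := fun i => lam i * (mu i - x i).

Definition HJ0 (n : nat) (C Cinv : mat) (lam mu : vec) (kappa T : R)
    (S : R -> vec -> R) : Prop :=
  regular n T S /\ (forall x, S T x = 0) /\
  forall t x, 0 <= t <= T ->
    dtime S t x + (kappa + 1) / 2 * bilin n C (grad S t x) (grad S t x)
    + (kappa + 1) * dot n (drift lam mu x) (grad S t x)
    + kappa / 2 * bilin n Cinv (drift lam mu x) (drift lam mu x) = 0.

Definition HJfull (n : nat) (C Cinv : mat) (lam mu : vec) (kappa T : R)
    (S : R -> vec -> R) : Prop :=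
  regular n T S /\ (forall x, S T x = 0) /\
  forall t x, 0 <= t <= T ->
    dtime S t x + (kappa + 1) * dot n (drift lam mu x) (grad S t x)
    + (kappa + 1) / 2 * bilin n C (grad S t x) (grad S t x)
    + kappa / 2 * bilin n Cinv (drift lam mu x) (drift lam mu x)
    + / 2 * trmul n C (hess S t x) = 0.

Definition zero_vec : vec := fun _ => 0.

From Stdlib Require Import Reals Lra Lia ClassicalEpsilon FunctionalExtensionality.
From Coquelicot Require Import Coquelicot.
Open Scope R_scope.

(* Write S0(t,x) = x^T A(t) x + b(t).x + c(t).  Its gradient is (A + A^T) x + b and its Hessian
   is A + A^T, so the Hamilton-Jacobi equation becomes a polynomial identity in x: with
   tau = T - t it reads dA/dtau = rhs_M A, db/dtau = rhs_v A b, dc/dtau = rhs_c b with zero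
   data at tau = 0, i.e. a matrix Riccati equation, a linear equation for b driven by A and a
   quadrature for c.  The right-hand sides for A and b are polynomial, so the power series
   solution in tau has coefficients bounded by D^k for an explicit D (Cauchy majorants) and
   converges for tau < 1/D, which gives T0.  As the Hessian does not depend on x,
   tr(C nabla^2 S0) is a function of t alone, and adding S1 only changes c. *)

(** * Finite sums *)

Lemma fsum_ext n f g : (forall i, (i < n)%nat -> f i = g i) -> fsum n f = fsum n g.
Proof.
  induction n as [|n IH]; simpl; intros H; [reflexivity|].
  rewrite IH, H; [reflexivity|lia|intros; apply H; lia].
Qed.

Lemma fsum_0 n : fsum n (fun _ => 0) = 0.
Proof. induction n; simpl; [|rewrite IHn]; lra. Qed.

Lemma fsum_eq0 n f : (forall i, (i < n)%nat -> f i = 0) -> fsum n f = 0.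
Proof. intros H. rewrite (fsum_ext n f (fun _ => 0)) by exact H. apply fsum_0. Qed.

Lemma fsum_add n f g : fsum n (fun i => f i + g i) = fsum n f + fsum n g.
Proof. induction n; simpl; [|rewrite IHn]; lra. Qed.

Lemma fsum_scal_l n c f : fsum n (fun i => c * f i) = c * fsum n f.
Proof. induction n; simpl; [|rewrite IHn]; lra. Qed.

Lemma fsum_scal_r n c f : fsum n (fun i => f i * c) = fsum n f * c.
Proof. induction n; simpl; [|rewrite IHn]; lra. Qed.

Lemma fsum_opp n f : fsum n (fun i => - f i) = - fsum n f.
Proof. induction n; simpl; [|rewrite IHn]; lra. Qed.

Lemma fsum_swap n m (f : nat -> nat -> R) :
  fsum n (fun i => fsum m (fun j => f i j)) = fsum m (fun j => fsum n (fun i => f i j)).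
Proof.
  induction n; simpl; [symmetry; apply fsum_0|].
  rewrite IHn, <- fsum_add. reflexivity.
Qed.

Lemma fsum_sum_f_R0 n k (f : nat -> nat -> R) :
  fsum n (fun p => sum_f_R0 (f p) k) = sum_f_R0 (fun l => fsum n (fun p => f p l)) k.
Proof. induction k; simpl; [reflexivity|]. rewrite fsum_add, IHk. reflexivity. Qed.

Lemma fsum_abs n f : Rabs (fsum n f) <= fsum n (fun i => Rabs (f i)).
Proof.
  induction n; simpl; [rewrite Rabs_R0; lra|].
  eapply Rle_trans; [apply Rabs_triang|lra].
Qed.

Lemma fsum_le n f g : (forall i, (i < n)%nat -> f i <= g i) -> fsum n f <= fsum n g.
Proof.
  induction n; simpl; intros H; [lra|].
  apply Rplus_le_compat; [apply IHn; intros; apply H|apply H]; lia.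
Qed.

Lemma fsum_ge0 n f : (forall i, (i < n)%nat -> 0 <= f i) -> 0 <= fsum n f.
Proof. intros H. rewrite <- (fsum_0 n). apply fsum_le. exact H. Qed.

Lemma fsum_term_le n f i : (forall j, (j < n)%nat -> 0 <= f j) -> (i < n)%nat -> f i <= fsum n f.
Proof.
  induction n; intros H Hi; [lia|]. simpl.
  assert (0 <= fsum n f) by (apply fsum_ge0; intros; apply H; lia).
  destruct (Nat.eq_dec i n) as [->|]; [lra|].
  pose proof (IHn (fun j Hj => H j ltac:(lia)) ltac:(lia)). pose proof (H n ltac:(lia)). lra.
Qed.

Definition kron (i j : nat) : R := if Nat.eqb i j then 1 else 0.

Lemma fsum_kron_l n i f : (i < n)%nat -> fsum n (fun j => kron j i * f j) = f i.
Proof.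
  induction n; intros H; [lia|]. simpl. unfold kron at 2.
  destruct (Nat.eqb_spec n i) as [->|Hne].
  - rewrite (fsum_ext _ _ (fun _ => 0)), fsum_0; [lra|].
    intros j Hj. unfold kron. destruct (Nat.eqb_spec j i); [lia|ring].
  - rewrite IHn by lia. ring.
Qed.

Lemma fsum_kron_r n i f : (i < n)%nat -> fsum n (fun j => f j * kron j i) = f i.
Proof.
  intros H. rewrite <- (fsum_kron_l n i f H). apply fsum_ext. intros; ring.
Qed.

Lemma Rabs_kron_le i j : Rabs (kron i j) <= 1.
Proof. unfold kron. destruct (Nat.eqb i j); rewrite ?Rabs_R1, ?Rabs_R0; lra. Qed.

(** * Quadratic polynomials *)

Definition col (N : mat) (j : nat) : vec := fun p => N p j.
Definition lin (n : nat) (N : mat) (x : vec) : vec := fun i => fsum n (fun j => N i j * x j).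
Definition aff (n : nat) (N : mat) (w x : vec) : vec := fun i => lin n N x i + w i.
Definition quad (n : nat) (M : mat) (v : vec) (c : R) (x : vec) : R :=
  bilin n M x x + dot n v x + c.
Definition hatM (M : mat) : mat := fun i j => M i j + M j i.

Definition bilin_aff_quad n (G N N' : mat) : mat := fun i j => bilin n G (col N i) (col N' j).
Definition bilin_aff_lin n (G N : mat) (w : vec) (N' : mat) (w' : vec) : vec :=
  fun i => bilin n G (col N i) w' + bilin n G w (col N' i).

Lemma quad_0 n x : quad n (fun _ _ => 0) (fun _ => 0) 0 x = 0.
Proof.
  unfold quad, bilin, dot. rewrite !fsum_eq0; [ring|intros; ring|].
  intros i _. apply fsum_eq0. intros; ring.
Qed.

Lemma fsum_swap3 n (F : nat -> nat -> nat -> R) :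
  fsum n (fun p => fsum n (fun q => fsum n (fun i => F p q i))) =
  fsum n (fun i => fsum n (fun p => fsum n (fun q => F p q i))).
Proof.
  transitivity (fsum n (fun p => fsum n (fun i => fsum n (fun q => F p q i)))).
  - apply fsum_ext; intros p _. apply fsum_swap.
  - apply fsum_swap.
Qed.

Lemma bilin_ext n G u u' v v' :
  (forall i, (i < n)%nat -> u i = u' i) -> (forall i, (i < n)%nat -> v i = v' i) ->
  bilin n G u v = bilin n G u' v'.
Proof.
  intros Hu Hv. apply fsum_ext; intros i Hi. apply fsum_ext; intros j Hj.
  rewrite Hu, Hv by assumption. reflexivity.
Qed.

Lemma bilin_add_l n G u u' v :
  bilin n G (fun i => u i + u' i) v = bilin n G u v + bilin n G u' v.
Proof.
  unfold bilin. rewrite <- fsum_add. apply fsum_ext; intros.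
  rewrite <- fsum_add. apply fsum_ext; intros; ring.
Qed.

Lemma bilin_add_r n G u v v' :
  bilin n G u (fun i => v i + v' i) = bilin n G u v + bilin n G u v'.
Proof.
  unfold bilin. rewrite <- fsum_add. apply fsum_ext; intros.
  rewrite <- fsum_add. apply fsum_ext; intros; ring.
Qed.

Lemma bilin_lin_l n G N v x :
  bilin n G (lin n N x) v = dot n (fun i => bilin n G (col N i) v) x.
Proof.
  unfold bilin, lin, dot, col.
  transitivity (fsum n (fun p => fsum n (fun q => fsum n (fun i => N p i * G p q * v q * x i)))).
  { apply fsum_ext; intros p _; apply fsum_ext; intros q _.
    rewrite <- !fsum_scal_r. apply fsum_ext; intros; ring. }
  rewrite fsum_swap3. apply fsum_ext; intros i _.
  rewrite <- fsum_scal_r. apply fsum_ext; intros p _. apply fsum_scal_r.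
Qed.

Lemma bilin_lin_r n G u N x :
  bilin n G u (lin n N x) = dot n (fun j => bilin n G u (col N j)) x.
Proof.
  unfold bilin, lin, dot, col.
  transitivity (fsum n (fun p => fsum n (fun q => fsum n (fun j => u p * G p q * N q j * x j)))).
  { apply fsum_ext; intros p _; apply fsum_ext; intros q _.
    rewrite <- fsum_scal_l. apply fsum_ext; intros; ring. }
  rewrite fsum_swap3. apply fsum_ext; intros j _.
  rewrite <- fsum_scal_r. apply fsum_ext; intros p _. apply fsum_scal_r.
Qed.

Lemma dot_dot_bilin n (M : mat) x :
  dot n (fun i => dot n (fun j => M i j) x) x = bilin n M x x.
Proof.
  unfold dot, bilin. apply fsum_ext; intros i _.
  rewrite Rmult_comm, <- fsum_scal_l. apply fsum_ext; intros; ring.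
Qed.

Lemma dot_add n v v' x : dot n (fun i => v i + v' i) x = dot n v x + dot n v' x.
Proof. unfold dot. rewrite <- fsum_add. apply fsum_ext; intros; ring. Qed.

Lemma bilin_aff n G N w N' w' x :
  bilin n G (aff n N w x) (aff n N' w' x) =
  quad n (bilin_aff_quad n G N N') (bilin_aff_lin n G N w N' w') (bilin n G w w') x.
Proof.
  unfold aff, quad, bilin_aff_lin.
  rewrite bilin_add_l, !bilin_add_r, dot_add.
  rewrite !bilin_lin_l, bilin_lin_r, <- dot_dot_bilin.
  unfold bilin_aff_quad.
  assert (E : dot n (fun i => bilin n G (col N i) (lin n N' x)) x =
              dot n (fun i => dot n (fun j => bilin n G (col N i) (col N' j)) x) x).
  { apply fsum_ext; intros i _. rewrite bilin_lin_r. reflexivity. }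
  rewrite E. ring.
Qed.

(** * Derivatives of quadratic functions *)

Lemma deriv_eq g x l : derivable_pt_lim g x l -> deriv g x = l.
Proof.
  intros H. unfold deriv.
  apply (uniqueness_limite g x); [|exact H].
  apply (epsilon_spec (inhabits 0) (fun l => derivable_pt_lim g x l)). exists l. exact H.
Qed.

Lemma derivable_pt_lim_fsum n (f : nat -> R -> R) (d : nat -> R) y :
  (forall k, (k < n)%nat -> derivable_pt_lim (f k) y (d k)) ->
  derivable_pt_lim (fun z => fsum n (fun k => f k z)) y (fsum n d).
Proof.
  induction n as [|n IH]; intros H; simpl.
  - apply derivable_pt_lim_const.
  - apply derivable_pt_lim_plus; [apply IH; intros|]; apply H; lia.
Qed.

Lemma upd_same x i p : upd x i (x i) p = x p.
Proof. unfold upd. destruct (Nat.eqb_spec p i); subst; reflexivity. Qed.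

Lemma derivable_pt_lim_upd x i p y : derivable_pt_lim (fun h => upd x i h p) y (kron p i).
Proof.
  unfold upd, kron. destruct (Nat.eqb p i).
  - apply derivable_pt_lim_id.
  - apply derivable_pt_lim_const.
Qed.

Lemma derivable_pt_lim_bilin_upd n M x i : (i < n)%nat ->
  derivable_pt_lim (fun h => bilin n M (upd x i h) (upd x i h)) (x i) (lin n (hatM M) x i).
Proof.
  intros Hi.
  assert (H : derivable_pt_lim (fun h => bilin n M (upd x i h) (upd x i h)) (x i)
     (fsum n (fun p => fsum n (fun q =>
        (kron p i * M p q + upd x i (x i) p * 0) * upd x i (x i) q
        + upd x i (x i) p * M p q * kron q i)))).
  { apply derivable_pt_lim_fsum; intros p _. apply derivable_pt_lim_fsum; intros q _.
    apply (derivable_pt_lim_mult (fun h => upd x i h p * M p q)).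
    - apply (derivable_pt_lim_mult (fun h => upd x i h p) (fun _ => M p q)).
      + apply derivable_pt_lim_upd.
      + apply derivable_pt_lim_const.
    - apply derivable_pt_lim_upd. }
  replace (lin n (hatM M) x i) with (fsum n (fun p => fsum n (fun q =>
        (kron p i * M p q + upd x i (x i) p * 0) * upd x i (x i) q
        + upd x i (x i) p * M p q * kron q i))); [exact H|symmetry].
  transitivity (fsum n (fun p => kron p i * fsum n (fun q => M p q * x q))
                + fsum n (fun q => fsum n (fun p => x p * M p q) * kron q i)).
  - rewrite fsum_kron_l, fsum_kron_r by exact Hi.
    unfold lin, hatM. rewrite <- fsum_add. apply fsum_ext; intros; ring.
  - rewrite (fsum_ext n (fun q => _ * kron q i)
                     (fun q => fsum n (fun p => x p * M p q * kron q i)))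
      by (intros; symmetry; apply fsum_scal_r).
    rewrite (fsum_swap n n (fun q p => x p * M p q * kron q i)), <- fsum_add.
    apply fsum_ext; intros p _.
    rewrite <- fsum_scal_l, <- fsum_add. apply fsum_ext; intros q _.
    rewrite !upd_same. ring.
Qed.

Lemma derivable_pt_lim_dot_upd n v x i : (i < n)%nat ->
  derivable_pt_lim (fun h => dot n v (upd x i h)) (x i) (v i).
Proof.
  intros Hi.
  replace (v i) with (fsum n (fun p => 0 * upd x i (x i) p + v p * kron p i))
    by (rewrite <- (fsum_kron_r n i v Hi); apply fsum_ext; intros; ring).
  apply derivable_pt_lim_fsum; intros p _.
  apply (derivable_pt_lim_mult (fun _ => v p)).
  - apply derivable_pt_lim_const.
  - apply derivable_pt_lim_upd.
Qed.

Lemma derivable_pt_lim_quad_upd n M v c x i : (i < n)%nat ->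
  derivable_pt_lim (fun h => quad n M v c (upd x i h)) (x i) (aff n (hatM M) v x i).
Proof.
  intros Hi. unfold quad, aff. rewrite <- (Rplus_0_r (_ + v i)).
  apply derivable_pt_lim_plus; [apply derivable_pt_lim_plus|apply derivable_pt_lim_const].
  - apply derivable_pt_lim_bilin_upd. exact Hi.
  - apply derivable_pt_lim_dot_upd. exact Hi.
Qed.

Lemma derivable_pt_lim_aff_upd n N w x i j : (j < n)%nat ->
  derivable_pt_lim (fun h => aff n N w (upd x j h) i) (x j) (N i j).
Proof.
  intros Hj. unfold aff, lin.
  replace (N i j) with (fsum n (fun q => 0 * upd x j (x j) q + N i q * kron q j) + 0)
    by (rewrite <- (fsum_kron_r n j (N i) Hj), Rplus_0_r; apply fsum_ext; intros; ring).
  apply derivable_pt_lim_plus; [|apply derivable_pt_lim_const].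
  apply derivable_pt_lim_fsum; intros q _.
  apply (derivable_pt_lim_mult (fun _ => N i q)).
  - apply derivable_pt_lim_const.
  - apply derivable_pt_lim_upd.
Qed.

Definition quad_fun n (A : R -> mat) (b : R -> vec) (c : R -> R) : R -> vec -> R :=
  fun t x => quad n (A t) (b t) (c t) x.

Section QuadFun.
Variables (n : nat) (A : R -> mat) (b : R -> vec) (c : R -> R).

Lemma grad_quad_fun t x i : (i < n)%nat ->
  grad (quad_fun n A b c) t x i = aff n (hatM (A t)) (b t) x i.
Proof. intros Hi. apply deriv_eq, derivable_pt_lim_quad_upd, Hi. Qed.

Lemma hess_quad_fun t x i j : (i < n)%nat -> (j < n)%nat ->
  hess (quad_fun n A b c) t x i j = hatM (A t) i j.
Proof.
  intros Hi Hj. apply deriv_eq.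
  apply (derivable_pt_lim_ext (fun h => aff n (hatM (A t)) (b t) (upd x j h) i)).
  - intros h. symmetry. apply grad_quad_fun, Hi.
  - apply derivable_pt_lim_aff_upd, Hj.
Qed.

Lemma trmul_hess_quad_fun G t x : trmul n G (hess (quad_fun n A b c) t x) = trmul n G (hatM (A t)).
Proof.
  apply fsum_ext; intros i Hi. apply fsum_ext; intros j Hj.
  rewrite hess_quad_fun by assumption. reflexivity.
Qed.

Lemma derivable_pt_lim_quad_fun_time t x dA db dc :
  (forall i j, (i < n)%nat -> (j < n)%nat -> derivable_pt_lim (fun s => A s i j) t (dA i j)) ->
  (forall i, (i < n)%nat -> derivable_pt_lim (fun s => b s i) t (db i)) ->
  derivable_pt_lim c t dc ->
  derivable_pt_lim (fun s => quad_fun n A b c s x) t (quad n dA db dc x).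
Proof.
  intros HA Hb Hc. unfold quad_fun, quad, bilin, dot.
  apply derivable_pt_lim_plus; [apply derivable_pt_lim_plus|exact Hc].
  - apply derivable_pt_lim_fsum; intros i Hi. apply derivable_pt_lim_fsum; intros j Hj.
    replace (x i * dA i j * x j) with ((0 * A t i j + x i * dA i j) * x j + x i * A t i j * 0) by ring.
    apply (derivable_pt_lim_mult (fun s => x i * A s i j)); [|apply derivable_pt_lim_const].
    apply (derivable_pt_lim_mult (fun _ => x i)); [apply derivable_pt_lim_const|auto].
  - apply derivable_pt_lim_fsum; intros i Hi.
    replace (db i * x i) with (db i * x i + b t i * 0) by ring.
    apply (derivable_pt_lim_mult (fun s => b s i)); [auto|apply derivable_pt_lim_const].
Qed.

Lemma regular_quad_fun T :
  (forall t x, 0 <= t <= T -> has_deriv (fun s => quad_fun n A b c s x) t) ->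
  regular n T (quad_fun n A b c).
Proof.
  intros Ht t x Htx. split; [exact (Ht t x Htx)|]. intros i j Hi Hj. split.
  - exists (aff n (hatM (A t)) (b t) x i). apply derivable_pt_lim_quad_upd, Hi.
  - exists (hatM (A t) i j).
    apply (derivable_pt_lim_ext (fun h => aff n (hatM (A t)) (b t) (upd x j h) i)).
    + intros h. symmetry. apply grad_quad_fun, Hi.
    + apply derivable_pt_lim_aff_upd, Hj.
Qed.

End QuadFun.

(** * The Riccati system *)

Lemma quad_lincomb3 n a1 a2 a3 M1 M2 M3 v1 v2 v3 c1 c2 c3 x :
  quad n (fun i j => a1 * M1 i j + a2 * M2 i j + a3 * M3 i j)
         (fun i => a1 * v1 i + a2 * v2 i + a3 * v3 i) (a1 * c1 + a2 * c2 + a3 * c3) x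
  = a1 * quad n M1 v1 c1 x + a2 * quad n M2 v2 c2 x + a3 * quad n M3 v3 c3 x.
Proof.
  unfold quad, bilin, dot.
  assert (HM : fsum n (fun i => fsum n (fun j => x i * (a1 * M1 i j + a2 * M2 i j + a3 * M3 i j) * x j))
    = a1 * fsum n (fun i => fsum n (fun j => x i * M1 i j * x j))
    + a2 * fsum n (fun i => fsum n (fun j => x i * M2 i j * x j))
    + a3 * fsum n (fun i => fsum n (fun j => x i * M3 i j * x j))).
  { rewrite <- !fsum_scal_l, <- !fsum_add. apply fsum_ext; intros i _.
    rewrite <- !fsum_scal_l, <- !fsum_add. apply fsum_ext; intros; ring. }
  assert (Hv : fsum n (fun i => (a1 * v1 i + a2 * v2 i + a3 * v3 i) * x i)
    = a1 * fsum n (fun i => v1 i * x i) + a2 * fsum n (fun i => v2 i * x i)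
    + a3 * fsum n (fun i => v3 i * x i)).
  { rewrite <- !fsum_scal_l, <- !fsum_add. apply fsum_ext; intros; ring. }
  rewrite HM, Hv. ring.
Qed.

Lemma dot_bilin_kron n u v : dot n u v = bilin n kron u v.
Proof.
  unfold dot, bilin. apply fsum_ext; intros i Hi.
  rewrite <- (fsum_kron_r n i (fun j => u i * v j) Hi).
  apply fsum_ext; intros j _. unfold kron. destruct (Nat.eqb_spec j i), (Nat.eqb_spec i j); subst; lia || ring.
Qed.

Section RiccatiField.
Variables (n : nat) (lam mu : vec) (C Cinv : mat) (kappa : R).

Definition drift_mx : mat := fun i j => - (lam i * kron i j).
Definition drift_cst : vec := fun i => lam i * mu i.

Lemma drift_aff x i : (i < n)%nat -> drift lam mu x i = aff n drift_mx drift_cst x i.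
Proof.
  intros Hi. unfold drift, aff, lin, drift_mx, drift_cst.
  rewrite (fsum_ext n _ (fun j => - (lam i * x j) * kron i j)) by (intros; ring).
  rewrite (fsum_ext n _ (fun j => - (lam i * x j) * kron j i)).
  - rewrite fsum_kron_r by exact Hi. ring.
  - intros j _. unfold kron. rewrite Nat.eqb_sym. reflexivity.
Qed.

Definition rhs_M (A : mat) : mat := fun i j =>
  (kappa + 1) / 2 * bilin_aff_quad n C (hatM A) (hatM A) i j
  + (kappa + 1) * bilin_aff_quad n kron drift_mx (hatM A) i j
  + kappa / 2 * bilin_aff_quad n Cinv drift_mx drift_mx i j.
Definition rhs_v (A : mat) (b : vec) : vec := fun i =>
  (kappa + 1) / 2 * bilin_aff_lin n C (hatM A) b (hatM A) b i
  + (kappa + 1) * bilin_aff_lin n kron drift_mx drift_cst (hatM A) b i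
  + kappa / 2 * bilin_aff_lin n Cinv drift_mx drift_cst drift_mx drift_cst i.
Definition rhs_c (b : vec) : R :=
  (kappa + 1) / 2 * bilin n C b b + (kappa + 1) * bilin n kron drift_cst b
  + kappa / 2 * bilin n Cinv drift_cst drift_cst.

Lemma hj_terms_quad A b x :
  let g := aff n (hatM A) b x in
  (kappa + 1) / 2 * bilin n C g g + (kappa + 1) * dot n (drift lam mu x) g
  + kappa / 2 * bilin n Cinv (drift lam mu x) (drift lam mu x)
  = quad n (rhs_M A) (rhs_v A b) (rhs_c b) x.
Proof.
  intros g. unfold rhs_M, rhs_v, rhs_c. rewrite quad_lincomb3, <- !bilin_aff.
  rewrite dot_bilin_kron.
  assert (Hd : forall G v, bilin n G (drift lam mu x) v = bilin n G (aff n drift_mx drift_cst x) v).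
  { intros G v. apply bilin_ext; [apply drift_aff|reflexivity]. }
  assert (Hd' : forall G, bilin n G (aff n drift_mx drift_cst x) (drift lam mu x)
                       = bilin n G (aff n drift_mx drift_cst x) (aff n drift_mx drift_cst x)).
  { intros G. apply bilin_ext; [reflexivity|apply drift_aff]. }
  rewrite !Hd, Hd'. reflexivity.
Qed.

End RiccatiField.

(** * Power series *)

Definition cauchy_sum (f : nat -> nat -> R) (k : nat) : R := sum_f_R0 (fun l => f l (k - l)%nat) k.

Lemma cauchy_sum_ext f g k :
  (forall l, (l <= k)%nat -> f l (k - l)%nat = g l (k - l)%nat) -> cauchy_sum f k = cauchy_sum g k.
Proof.
  intros H. apply sum_eq. exact H.
Qed.

Lemma is_pseries_R_scal (a : nat -> R) c s l :
  is_pseries a s l -> is_pseries (fun k => c * a k) s (c * l).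
Proof. intros H. apply (is_pseries_scal (K:=R_AbsRing) (V:=R_NormedModule) c a s l); [apply Rmult_comm|exact H]. Qed.

Lemma is_pseries_R_plus (a b : nat -> R) s la lb :
  is_pseries a s la -> is_pseries b s lb -> is_pseries (fun k => a k + b k) s (la + lb).
Proof. exact (is_pseries_plus (K:=R_AbsRing) (V:=R_NormedModule) a b s la lb). Qed.

Lemma is_pseries_kron0 c s : is_pseries (fun k => kron k 0 * c) s c.
Proof.
  unfold is_pseries, is_series.
  eapply filterlim_ext; [|apply filterlim_const].
  intros N. simpl. rewrite sum_n_Reals. induction N; simpl.
  - change (scal one (kron 0 0 * c)) with (1 * (1 * c)). ring.
  - rewrite <- IHN. change (scal (mult s (pow_n s N)) (kron (S N) 0 * c))
      with ((s * pow_n s N) * (kron (S N) 0 * c)).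
    unfold kron. simpl. ring.
Qed.

Lemma is_pseries_fsum n (a : nat -> nat -> R) s (l : nat -> R) :
  (forall p, (p < n)%nat -> is_pseries (a p) s (l p)) ->
  is_pseries (fun k => fsum n (fun p => a p k)) s (fsum n l).
Proof.
  induction n as [|n IH]; intros H; simpl.
  - apply (is_pseries_ext (fun k => kron k 0 * 0)); [intros; simpl; ring|].
    apply is_pseries_kron0.
  - apply is_pseries_R_plus; [apply IH; intros|]; apply H; lia.
Qed.

Lemma CV_radius_gt_of_geom_bound (a : nat -> R) K D s : 0 < D ->
  (forall k, Rabs (a k) <= K * D ^ k) -> Rabs s < / D -> Rbar_lt (Rabs s) (CV_radius a).
Proof.
  intros HD Hb Hs.
  apply Rbar_lt_le_trans with (Finite (/ D)); [exact Hs|].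
  apply (proj1 (CV_radius_bounded a)). exists K. intros k.
  rewrite Rabs_mult, <- RPow_abs, (Rabs_pos_eq (/ D)) by (left; apply Rinv_0_lt_compat, HD).
  apply Rle_trans with (K * D ^ k * (/ D) ^ k).
  - apply Rmult_le_compat_r; [apply pow_le; left; apply Rinv_0_lt_compat, HD|apply Hb].
  - rewrite Rmult_assoc, <- Rpow_mult_distr, Rinv_r, pow1 by lra. lra.
Qed.

Section Series.
Variable n : nat.

Definition vec_series (u : nat -> vec) (s : R) (U : vec) : Prop :=
  forall p, (p < n)%nat ->
    is_pseries (fun k => u k p) s (U p) /\ Rbar_lt (Rabs s) (CV_radius (fun k => u k p)).

Definition mx_series (N : nat -> mat) (s : R) (A : mat) : Prop :=
  forall j, (j < n)%nat -> vec_series (fun k => col (N k) j) s (col A j).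

Lemma is_pseries_cauchy_bilin G u u' U U' s :
  vec_series u s U -> vec_series u' s U' ->
  is_pseries (cauchy_sum (fun l m => bilin n G (u l) (u' m))) s (bilin n G U U').
Proof.
  intros Hu Hu'.
  apply (is_pseries_ext (fun k => fsum n (fun p => fsum n (fun q =>
           G p q * PS_mult (fun l => u l p) (fun m => u' m q) k)))).
  { intros k. unfold cauchy_sum, PS_mult, bilin.
    rewrite <- fsum_sum_f_R0. apply fsum_ext; intros p _.
    rewrite <- fsum_sum_f_R0. apply fsum_ext; intros q _.
    rewrite scal_sum. apply sum_eq; intros; ring. }
  unfold bilin. apply is_pseries_fsum; intros p Hp. apply is_pseries_fsum; intros q Hq.
  replace (U p * G p q * U' q) with (G p q * (U p * U' q)) by ring.
  apply is_pseries_R_scal.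
  destruct (Hu p Hp), (Hu' q Hq). apply is_pseries_mult; assumption.
Qed.

Lemma vec_series_of_bound u K D s : 0 < D -> Rabs s < / D ->
  (forall k p, (p < n)%nat -> Rabs (u k p) <= K * D ^ k) ->
  vec_series u s (fun p => PSeries (fun k => u k p) s).
Proof.
  intros HD Hs Hb p Hp.
  assert (Hr : Rbar_lt (Rabs s) (CV_radius (fun k => u k p)))
    by (apply (CV_radius_gt_of_geom_bound _ K D); auto).
  split; [apply PSeries_correct, CV_radius_inside|]; exact Hr.
Qed.

Lemma mx_series_hatM N A K D s : 0 < D -> Rabs s < / D ->
  (forall k p q, (p < n)%nat -> (q < n)%nat -> Rabs (N k p q) <= K * D ^ k) ->
  mx_series N s A -> mx_series (fun k => hatM (N k)) s (hatM A).
Proof.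
  intros HD Hs Hb HN j Hj p Hp. unfold col, hatM. split.
  - apply is_pseries_R_plus; [apply (HN j Hj p Hp)|apply (HN p Hp j Hj)].
  - apply (CV_radius_gt_of_geom_bound _ (2 * K) D); auto. intros k.
    eapply Rle_trans; [apply Rabs_triang|].
    pose proof (Hb k p j Hp Hj). pose proof (Hb k j p Hj Hp). lra.
Qed.

Lemma vec_series_kron0 w s : vec_series (fun k p => kron k 0 * w p) s w.
Proof.
  intros p _. split; [apply is_pseries_kron0|].
  apply (CV_radius_gt_of_geom_bound _ (Rabs (w p)) (/ (Rabs s + 1))).
  - apply Rinv_0_lt_compat. pose proof (Rabs_pos s). lra.
  - intros k. rewrite Rabs_mult. unfold kron. destruct (Nat.eqb_spec k 0) as [->|].
    + simpl. rewrite Rabs_R1. lra.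
    + rewrite Rabs_R0, Rmult_0_l. apply Rmult_le_pos; [apply Rabs_pos|].
      apply pow_le. left. apply Rinv_0_lt_compat. pose proof (Rabs_pos s). lra.
  - rewrite Rinv_inv. lra.
Qed.

End Series.

(** * Taylor coefficients of the Riccati solution *)

Section StrongRecursion.
Variables (X : Type) (x0 : X) (step : nat -> (nat -> X) -> X).

Fixpoint rec_prefix (k : nat) : nat -> X :=
  match k with
  | O => fun _ => x0
  | S k' => fun m => if Nat.leb m k' then rec_prefix k' m else step k' (rec_prefix k')
  end.

Definition strong_rec (k : nat) : X := rec_prefix k k.

Lemma rec_prefix_eq k m : (m <= k)%nat -> rec_prefix k m = strong_rec m.
Proof.
  induction k as [|k IH]; intros H.
  - replace m with 0%nat by lia. reflexivity.
  - simpl. destruct (Nat.leb_spec m k); [apply IH; lia|].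
    replace m with (S k) by lia.
    change (strong_rec (S k)) with (if Nat.leb (S k) k then rec_prefix k (S k)
                                    else step k (rec_prefix k)).
    rewrite (proj2 (Nat.leb_gt (S k) k)) by lia. reflexivity.
Qed.

Lemma strong_rec_S k :
  (forall h h', (forall l, (l <= k)%nat -> h l = h' l) -> step k h = step k h') ->
  strong_rec (S k) = step k strong_rec.
Proof.
  intros Hloc.
  change (strong_rec (S k)) with (if Nat.leb (S k) k then rec_prefix k (S k)
                                  else step k (rec_prefix k)).
  rewrite (proj2 (Nat.leb_gt (S k) k)) by lia.
  apply Hloc. intros l Hl. apply rec_prefix_eq, Hl.
Qed.

End StrongRecursion.

Arguments strong_rec {X} x0 step k.

Definition l1norm (n : nat) (G : mat) : R := fsum n (fun p => fsum n (fun q => Rabs (G p q))).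

Lemma l1norm_ge0 n G : 0 <= l1norm n G.
Proof. apply fsum_ge0; intros; apply fsum_ge0; intros; apply Rabs_pos. Qed.

Lemma Rabs_bilin_le n G u v a b :
  (forall p, (p < n)%nat -> Rabs (u p) <= a) -> (forall q, (q < n)%nat -> Rabs (v q) <= b) ->
  Rabs (bilin n G u v) <= a * b * l1norm n G.
Proof.
  intros Hu Hv. unfold bilin, l1norm. rewrite <- fsum_scal_l.
  eapply Rle_trans; [apply fsum_abs|]. apply fsum_le; intros p Hp.
  rewrite <- fsum_scal_l. eapply Rle_trans; [apply fsum_abs|]. apply fsum_le; intros q Hq.
  rewrite !Rabs_mult.
  pose proof (Rabs_pos (u p)). pose proof (Rabs_pos (v q)). pose proof (Rabs_pos (G p q)).
  specialize (Hu p Hp). specialize (Hv q Hq).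
  replace (a * b * Rabs (G p q)) with (a * Rabs (G p q) * b) by ring.
  apply Rmult_le_compat; try apply Rmult_le_compat; try lra.
  apply Rmult_le_pos; lra.
Qed.

Lemma Rabs_cauchy_le f k B :
  (forall l, (l <= k)%nat -> Rabs (f l (k - l)%nat) <= B) -> Rabs (cauchy_sum f k) <= INR (S k) * B.
Proof.
  intros H. unfold cauchy_sum. eapply Rle_trans; [apply sum_f_R0_triangle|].
  rewrite Rmult_comm, <- sum_cte. apply sum_Rle. intros l Hl. apply H, Hl.
Qed.

Lemma Rabs_lincomb3_le a1 a2 a3 X1 X2 X3 B1 B2 B3 :
  Rabs X1 <= B1 -> Rabs X2 <= B2 -> Rabs X3 <= B3 ->
  Rabs (a1 * X1 + a2 * X2 + a3 * X3) <= Rabs a1 * B1 + Rabs a2 * B2 + Rabs a3 * B3.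
Proof.
  intros H1 H2 H3. eapply Rle_trans; [apply Rabs_triang|].
  eapply Rle_trans; [apply Rplus_le_compat_r, Rabs_triang|]. rewrite !Rabs_mult.
  pose proof (Rabs_pos a1). pose proof (Rabs_pos a2). pose proof (Rabs_pos a3).
  apply Rplus_le_compat; [apply Rplus_le_compat|]; apply Rmult_le_compat_l; assumption.
Qed.

Lemma pow_split D l k : (l <= k)%nat -> D ^ l * D ^ (k - l) = D ^ k.
Proof. intros H. rewrite <- pow_add. f_equal. lia. Qed.

Section CoefBounds.
Variables (n : nat) (G : mat) (K D : R).

Definition coef_quad (N N' : nat -> mat) (k : nat) : mat :=
  fun i j => cauchy_sum (fun l m => bilin_aff_quad n G (N l) (N' m) i j) k.
Definition coef_lin (N : nat -> mat) (w : nat -> vec) (N' : nat -> mat) (w' : nat -> vec)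
    (k : nat) : vec :=
  fun i => cauchy_sum (fun l m => bilin_aff_lin n G (N l) (w l) (N' m) (w' m) i) k.

Lemma coef_quad_local N1 N1' N2 N2' k :
  (forall l, (l <= k)%nat -> N1 l = N2 l) -> (forall l, (l <= k)%nat -> N1' l = N2' l) ->
  coef_quad N1 N1' k = coef_quad N2 N2' k.
Proof.
  intros E E'. unfold coef_quad.
  apply functional_extensionality; intros i.
  apply functional_extensionality; intros j.
  apply cauchy_sum_ext. intros l Hl. rewrite E, E' by lia. reflexivity.
Qed.

Lemma coef_lin_local N1 w1 N1' w1' N2 w2 N2' w2' k :
  (forall l, (l <= k)%nat -> N1 l = N2 l) -> (forall l, (l <= k)%nat -> w1 l = w2 l) ->
  (forall l, (l <= k)%nat -> N1' l = N2' l) -> (forall l, (l <= k)%nat -> w1' l = w2' l) ->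
  coef_lin N1 w1 N1' w1' k = coef_lin N2 w2 N2' w2' k.
Proof.
  intros E Ew E' Ew'. unfold coef_lin.
  apply functional_extensionality; intros i.
  apply cauchy_sum_ext. intros l Hl. rewrite E, Ew, E', Ew' by lia. reflexivity.
Qed.

Definition mx_bounded_upto (N : nat -> mat) (k : nat) : Prop :=
  forall l p q, (l <= k)%nat -> (p < n)%nat -> (q < n)%nat -> Rabs (N l p q) <= K * D ^ l.
Definition vec_bounded_upto (w : nat -> vec) (k : nat) : Prop :=
  forall l p, (l <= k)%nat -> (p < n)%nat -> Rabs (w l p) <= K * D ^ l.

Lemma Rabs_coef_quad_le N N' k i j : (i < n)%nat -> (j < n)%nat ->
  mx_bounded_upto N k -> mx_bounded_upto N' k ->
  Rabs (coef_quad N N' k i j) <= INR (S k) * (K * K * l1norm n G) * D ^ k.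
Proof.
  intros Hi Hj HN HN'. rewrite Rmult_assoc. apply Rabs_cauchy_le. intros l Hl.
  replace (K * K * l1norm n G * D ^ k) with (K * D ^ l * (K * D ^ (k - l)) * l1norm n G)
    by (rewrite <- (pow_split D l k Hl); ring).
  apply Rabs_bilin_le; intros p Hp; unfold col; [apply HN|apply HN']; lia.
Qed.

Lemma Rabs_coef_lin_le N w N' w' k i : (i < n)%nat ->
  mx_bounded_upto N k -> vec_bounded_upto w k -> mx_bounded_upto N' k -> vec_bounded_upto w' k ->
  Rabs (coef_lin N w N' w' k i) <= INR (S k) * (2 * K * K * l1norm n G) * D ^ k.
Proof.
  intros Hi HN Hw HN' Hw'. rewrite Rmult_assoc. apply Rabs_cauchy_le. intros l Hl.
  unfold bilin_aff_lin. eapply Rle_trans; [apply Rabs_triang|].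
  replace (2 * K * K * l1norm n G * D ^ k)
    with (K * D ^ l * (K * D ^ (k - l)) * l1norm n G + K * D ^ l * (K * D ^ (k - l)) * l1norm n G)
    by (rewrite <- (pow_split D l k Hl); ring).
  apply Rplus_le_compat; apply Rabs_bilin_le; intros p Hp; unfold col;
    [apply HN|apply Hw'|apply Hw|apply HN']; lia.
Qed.

End CoefBounds.

Record quad_coef := { cM : mat; cv : vec }.

Section RiccatiCoefs.
Variables (n : nat) (lam mu : vec) (C Cinv : mat) (kappa : R).

Definition hat_seq (h : nat -> quad_coef) (l : nat) : mat := hatM (cM (h l)).
Definition v_seq (h : nat -> quad_coef) (l : nat) : vec := cv (h l).
Definition drift_mx_seq (l : nat) : mat := fun p q => kron l 0 * drift_mx lam p q.
Definition drift_cst_seq (l : nat) : vec := fun p => kron l 0 * drift_cst lam mu p.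

Definition rhs_M_coef (h : nat -> quad_coef) (k : nat) : mat := fun i j =>
  (kappa + 1) / 2 * coef_quad n C (hat_seq h) (hat_seq h) k i j
  + (kappa + 1) * coef_quad n kron drift_mx_seq (hat_seq h) k i j
  + kappa / 2 * coef_quad n Cinv drift_mx_seq drift_mx_seq k i j.
Definition rhs_v_coef (h : nat -> quad_coef) (k : nat) : vec := fun i =>
  (kappa + 1) / 2 * coef_lin n C (hat_seq h) (v_seq h) (hat_seq h) (v_seq h) k i
  + (kappa + 1) * coef_lin n kron drift_mx_seq drift_cst_seq (hat_seq h) (v_seq h) k i
  + kappa / 2 * coef_lin n Cinv drift_mx_seq drift_cst_seq drift_mx_seq drift_cst_seq k i.

Definition riccati_step (k : nat) (h : nat -> quad_coef) : quad_coef :=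
  {| cM := fun i j => / INR (S k) * rhs_M_coef h k i j;
     cv := fun i => / INR (S k) * rhs_v_coef h k i |}.

Definition riccati_coefs : nat -> quad_coef :=
  strong_rec {| cM := fun _ _ => 0; cv := fun _ => 0 |} riccati_step.

Lemma riccati_coefs_S k : riccati_coefs (S k) = riccati_step k riccati_coefs.
Proof.
  apply strong_rec_S. intros h h' E. unfold riccati_step, rhs_M_coef, rhs_v_coef.
  assert (Ehat : forall l, (l <= k)%nat -> hat_seq h l = hat_seq h' l)
    by (intros l Hl; unfold hat_seq; rewrite E by exact Hl; reflexivity).
  assert (Ev : forall l, (l <= k)%nat -> v_seq h l = v_seq h' l)
    by (intros l Hl; unfold v_seq; rewrite E by exact Hl; reflexivity).
  rewrite !(coef_quad_local n C (hat_seq h) (hat_seq h) (hat_seq h') (hat_seq h') k Ehat Ehat).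
  rewrite !(coef_quad_local n kron drift_mx_seq (hat_seq h) drift_mx_seq (hat_seq h') k
              (fun _ _ => eq_refl) Ehat).
  rewrite !(coef_lin_local n C _ _ _ _ _ _ _ _ k Ehat Ev Ehat Ev).
  rewrite !(coef_lin_local n kron drift_mx_seq drift_cst_seq _ _ drift_mx_seq drift_cst_seq _ _ k
              (fun _ _ => eq_refl) (fun _ _ => eq_refl) Ehat Ev).
  reflexivity.
Qed.

Definition drift_size : R := fsum n (fun p => Rabs (lam p) + Rabs (lam p * mu p)).
Definition coef_scale : R := 2 + drift_size.
Definition growth_weight : R :=
  Rabs ((kappa + 1) / 2) * l1norm n C + Rabs (kappa + 1) * l1norm n kron
  + Rabs (kappa / 2) * l1norm n Cinv.
Definition coef_growth : R := 2 * coef_scale * coef_scale * growth_weight.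
Definition coef_ratio : R := 1 + coef_growth.

Lemma drift_size_ge p : (p < n)%nat -> Rabs (lam p) + Rabs (lam p * mu p) <= drift_size.
Proof.
  intros Hp. apply (fsum_term_le n (fun p => Rabs (lam p) + Rabs (lam p * mu p))); [|exact Hp].
  intros; pose proof (Rabs_pos (lam j)); pose proof (Rabs_pos (lam j * mu j)); lra.
Qed.

Lemma coef_scale_ge2 : 2 <= coef_scale.
Proof.
  unfold coef_scale. enough (0 <= drift_size) by lra.
  apply fsum_ge0. intros p _. pose proof (Rabs_pos (lam p)). pose proof (Rabs_pos (lam p * mu p)). lra.
Qed.

Lemma growth_weight_ge0 : 0 <= growth_weight.
Proof.
  pose proof (l1norm_ge0 n C). pose proof (l1norm_ge0 n kron). pose proof (l1norm_ge0 n Cinv).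
  pose proof (Rabs_pos ((kappa + 1) / 2)). pose proof (Rabs_pos (kappa + 1)).
  pose proof (Rabs_pos (kappa / 2)).
  unfold growth_weight. repeat apply Rplus_le_le_0_compat; apply Rmult_le_pos; lra.
Qed.

Lemma coef_growth_ge0 : 0 <= coef_growth.
Proof.
  unfold coef_growth. pose proof coef_scale_ge2. pose proof growth_weight_ge0.
  apply Rmult_le_pos; nra.
Qed.

Lemma Rabs_kron0_mul_le l x D : 1 <= D -> 0 <= x -> x <= coef_scale -> Rabs (kron l 0) * x <= coef_scale * D ^ l.
Proof.
  intros HD Hx Hs. pose proof (Rabs_kron_le l 0). pose proof (pow_R1_Rle D l HD).
  pose proof (Rabs_pos (kron l 0)). nra.
Qed.

Section Bounds.
Variables (D : R) (HD : 1 <= D).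

Lemma drift_mx_seq_bounded k : mx_bounded_upto n coef_scale D drift_mx_seq k.
Proof.
  intros l p q _ Hp _. unfold drift_mx_seq, drift_mx.
  rewrite Rabs_mult, Rabs_Ropp, Rabs_mult. apply Rabs_kron0_mul_le; [exact HD| |].
  - apply Rmult_le_pos; apply Rabs_pos.
  - pose proof (drift_size_ge p Hp). pose proof (Rabs_pos (lam p * mu p)).
    pose proof (Rabs_kron_le p q). pose proof (Rabs_pos (kron p q)). pose proof (Rabs_pos (lam p)).
    unfold coef_scale. nra.
Qed.

Lemma drift_cst_seq_bounded k : vec_bounded_upto n coef_scale D drift_cst_seq k.
Proof.
  intros l p _ Hp. unfold drift_cst_seq, drift_cst.
  rewrite Rabs_mult. apply Rabs_kron0_mul_le; [exact HD|apply Rabs_pos|].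
  pose proof (drift_size_ge p Hp). pose proof (Rabs_pos (lam p)). unfold coef_scale. lra.
Qed.

Lemma weighted_growth_le P Q c : 0 <= P -> 0 <= Q -> 0 <= c <= 2 ->
  Rabs ((kappa + 1) / 2) * (P * (c * coef_scale * coef_scale * l1norm n C) * Q)
  + Rabs (kappa + 1) * (P * (c * coef_scale * coef_scale * l1norm n kron) * Q)
  + Rabs (kappa / 2) * (P * (c * coef_scale * coef_scale * l1norm n Cinv) * Q)
  <= P * coef_growth * Q.
Proof.
  intros HP HQ Hc. unfold coef_growth.
  set (s := coef_scale). pose proof growth_weight_ge0 as Hw.
  assert (HPQ : 0 <= P * Q * (s * s) * growth_weight)
    by (apply Rmult_le_pos; [apply Rmult_le_pos; [apply Rmult_le_pos|apply Rle_0_sqr]|]; assumption).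
  transitivity (c * (P * Q * (s * s) * growth_weight)); [apply Req_le; unfold growth_weight; ring|].
  transitivity (2 * (P * Q * (s * s) * growth_weight)); [nra|apply Req_le; ring].
Qed.

Lemma Rabs_rhs_M_coef_le h k i j : (i < n)%nat -> (j < n)%nat ->
  mx_bounded_upto n coef_scale D (hat_seq h) k ->
  Rabs (rhs_M_coef h k i j) <= INR (S k) * coef_growth * D ^ k.
Proof.
  intros Hi Hj Hh. unfold rhs_M_coef.
  eapply Rle_trans; [apply Rabs_lincomb3_le; apply Rabs_coef_quad_le; eauto;
    apply drift_mx_seq_bounded|].
  eapply Rle_trans;
    [|apply (weighted_growth_le _ _ 1); [apply pos_INR|apply pow_le; lra|lra]].
  apply Req_le. ring.
Qed.

Lemma Rabs_rhs_v_coef_le h k i : (i < n)%nat ->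
  mx_bounded_upto n coef_scale D (hat_seq h) k -> vec_bounded_upto n coef_scale D (v_seq h) k ->
  Rabs (rhs_v_coef h k i) <= INR (S k) * coef_growth * D ^ k.
Proof.
  intros Hi Hh Hv. unfold rhs_v_coef.
  eapply Rle_trans; [apply Rabs_lincomb3_le; apply Rabs_coef_lin_le; eauto;
    solve [apply drift_mx_seq_bounded|apply drift_cst_seq_bounded]|].
  eapply Rle_trans;
    [|apply (weighted_growth_le _ _ 2); [apply pos_INR|apply pow_le; lra|lra]].
  apply Req_le. ring.
Qed.

End Bounds.

Lemma coef_ratio_ge1 : 1 <= coef_ratio.
Proof. unfold coef_ratio. pose proof coef_growth_ge0. lra. Qed.

Lemma coef_ratio_pos : 0 < coef_ratio.
Proof. pose proof coef_ratio_ge1. lra. Qed.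

Lemma majorant_step k X : Rabs X <= INR (S k) * coef_growth * coef_ratio ^ k ->
  Rabs (/ INR (S k) * X) <= coef_ratio ^ S k.
Proof.
  intros H. assert (HS : 0 < INR (S k)) by apply lt_0_INR, Nat.lt_0_succ.
  rewrite Rabs_mult, Rabs_inv, Rabs_pos_eq by lra.
  apply Rle_trans with (coef_growth * coef_ratio ^ k).
  - apply (Rmult_le_reg_l (INR (S k))); [exact HS|].
    rewrite <- Rmult_assoc, Rinv_r, Rmult_1_l by lra. rewrite <- Rmult_assoc. exact H.
  - simpl. apply Rmult_le_compat_r; [apply pow_le; pose proof coef_ratio_ge1; lra|].
    unfold coef_ratio. lra.
Qed.

(* (k+1) times a coefficient of order k+1 is a convolution of k+1 products of earlier
   coefficients, each bounded by coef_growth * coef_ratio^k: the Cauchy majorant argument. *)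
Lemma riccati_coefs_bound k :
  (forall i j, (i < n)%nat -> (j < n)%nat -> Rabs (cM (riccati_coefs k) i j) <= coef_ratio ^ k) /\
  (forall i, (i < n)%nat -> Rabs (cv (riccati_coefs k) i) <= coef_ratio ^ k).
Proof.
  pose proof coef_ratio_ge1 as HD. pose proof coef_scale_ge2 as Hs.
  enough (H : forall l, (l <= k)%nat ->
    (forall i j, (i < n)%nat -> (j < n)%nat -> Rabs (cM (riccati_coefs l) i j) <= coef_ratio ^ l) /\
    (forall i, (i < n)%nat -> Rabs (cv (riccati_coefs l) i) <= coef_ratio ^ l)) by (apply H; lia).
  induction k as [|k IH]; intros l Hl.
  - replace l with 0%nat by lia. simpl. rewrite Rabs_R0. split; intros; lra.
  - destruct (Nat.eq_dec l (S k)) as [->|]; [|apply IH; lia].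
    assert (Hhat : mx_bounded_upto n coef_scale coef_ratio (hat_seq riccati_coefs) k).
    { intros m p q Hm Hp Hq. unfold hat_seq, hatM.
      destruct (IH m Hm) as [IHM _]. pose proof (IHM p q Hp Hq). pose proof (IHM q p Hq Hp).
      pose proof (pow_R1_Rle coef_ratio m HD).
      eapply Rle_trans; [apply Rabs_triang|]. nra. }
    assert (Hv : vec_bounded_upto n coef_scale coef_ratio (v_seq riccati_coefs) k).
    { intros m p Hm Hp. unfold v_seq. destruct (IH m Hm) as [_ IHv]. pose proof (IHv p Hp).
      pose proof (pow_R1_Rle coef_ratio m HD). nra. }
    rewrite riccati_coefs_S. simpl. split.
    + intros i j Hi Hj. apply majorant_step, Rabs_rhs_M_coef_le; assumption.
    + intros i Hi. apply majorant_step, Rabs_rhs_v_coef_le; assumption.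
Qed.

End RiccatiCoefs.

Section CoefSeries.
Variables (n : nat) (G : mat).

Lemma is_pseries_coef_quad N N' A A' s i j : (i < n)%nat -> (j < n)%nat ->
  mx_series n N s A -> mx_series n N' s A' ->
  is_pseries (fun k => coef_quad n G N N' k i j) s (bilin_aff_quad n G A A' i j).
Proof.
  intros Hi Hj HN HN'. apply is_pseries_cauchy_bilin; [apply HN, Hi|apply HN', Hj].
Qed.

Lemma is_pseries_coef_lin N w N' w' A b A' b' s i : (i < n)%nat ->
  mx_series n N s A -> vec_series n w s b -> mx_series n N' s A' -> vec_series n w' s b' ->
  is_pseries (fun k => coef_lin n G N w N' w' k i) s (bilin_aff_lin n G A b A' b' i).
Proof.
  intros Hi HN Hw HN' Hw'.
  apply (is_pseries_ext (fun k => cauchy_sum (fun l m => bilin n G (col (N l) i) (w' m)) k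
                                 + cauchy_sum (fun l m => bilin n G (w l) (col (N' m) i)) k)).
  { intros k. unfold coef_lin, cauchy_sum, bilin_aff_lin. rewrite <- sum_plus. reflexivity. }
  apply is_pseries_R_plus; apply is_pseries_cauchy_bilin; auto.
Qed.

End CoefSeries.

Section RiccatiSeries.
Variables (n : nat) (lam mu : vec) (C Cinv : mat) (kappa : R).

Let coefs := riccati_coefs n lam mu C Cinv kappa.
Let D := coef_ratio n lam mu C Cinv kappa.

Definition riccati_A (s : R) : mat := fun i j => PSeries (fun k => cM (coefs k) i j) s.
Definition riccati_b (s : R) : vec := fun i => PSeries (fun k => cv (coefs k) i) s.

Section InsideRadius.
Variables (s : R) (Hs : Rabs s < / D).

Lemma riccati_A_series : mx_series n (fun k => cM (coefs k)) s (riccati_A s).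
Proof.
  intros j Hj. apply (vec_series_of_bound n _ 1 D s (coef_ratio_pos n lam mu C Cinv kappa) Hs).
  intros k p Hp. rewrite Rmult_1_l. apply (riccati_coefs_bound n lam mu C Cinv kappa k); auto.
Qed.

Lemma riccati_b_series : vec_series n (fun k => cv (coefs k)) s (riccati_b s).
Proof.
  apply (vec_series_of_bound n _ 1 D s (coef_ratio_pos n lam mu C Cinv kappa) Hs).
  intros k p Hp. rewrite Rmult_1_l. apply (riccati_coefs_bound n lam mu C Cinv kappa k); auto.
Qed.

Lemma riccati_hat_series : mx_series n (hat_seq coefs) s (hatM (riccati_A s)).
Proof.
  apply (mx_series_hatM n _ _ 1 D s (coef_ratio_pos n lam mu C Cinv kappa) Hs); [|exact riccati_A_series].
  intros k p q Hp Hq. rewrite Rmult_1_l. apply (riccati_coefs_bound n lam mu C Cinv kappa k); auto.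
Qed.

Lemma drift_mx_series : mx_series n (drift_mx_seq lam) s (drift_mx lam).
Proof. intros j _. apply vec_series_kron0. Qed.

Lemma drift_cst_series : vec_series n (drift_cst_seq lam mu) s (drift_cst lam mu).
Proof. apply vec_series_kron0. Qed.

Lemma riccati_A_derive_series i j : (i < n)%nat -> (j < n)%nat ->
  is_pseries (PS_derive (fun k => cM (coefs k) i j)) s (rhs_M n lam C Cinv kappa (riccati_A s) i j).
Proof.
  intros Hi Hj.
  apply (is_pseries_ext (fun k => rhs_M_coef n lam C Cinv kappa coefs k i j)).
  { intros k. unfold PS_derive, coefs. rewrite riccati_coefs_S. unfold riccati_step; cbn [cM cv].
    rewrite <- Rmult_assoc, Rinv_r, Rmult_1_l; [reflexivity|apply not_0_INR; lia]. }
  unfold rhs_M_coef, rhs_M.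
  pose proof riccati_hat_series. pose proof drift_mx_series.
  apply is_pseries_R_plus; [apply is_pseries_R_plus|];
    apply is_pseries_R_scal; apply is_pseries_coef_quad; auto.
Qed.

Lemma riccati_b_derive_series i : (i < n)%nat ->
  is_pseries (PS_derive (fun k => cv (coefs k) i)) s
    (rhs_v n lam mu C Cinv kappa (riccati_A s) (riccati_b s) i).
Proof.
  intros Hi.
  apply (is_pseries_ext (fun k => rhs_v_coef n lam mu C Cinv kappa coefs k i)).
  { intros k. unfold PS_derive, coefs. rewrite riccati_coefs_S. unfold riccati_step; cbn [cM cv].
    rewrite <- Rmult_assoc, Rinv_r, Rmult_1_l; [reflexivity|apply not_0_INR; lia]. }
  unfold rhs_v_coef, rhs_v.
  pose proof riccati_hat_series. pose proof riccati_b_series.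
  pose proof drift_mx_series. pose proof drift_cst_series.
  apply is_pseries_R_plus; [apply is_pseries_R_plus|];
    apply is_pseries_R_scal; apply is_pseries_coef_lin; auto.
Qed.

End InsideRadius.

End RiccatiSeries.

(** * The solution on [0, T] *)

(* Truncating the time variable keeps the power series inside their disc of
   convergence, so that the coefficients are continuous on all of R. *)
Definition clamp (rho u : R) : R := Rmax (- rho) (Rmin rho u).

Lemma Rabs_clamp_le rho u : 0 <= rho -> Rabs (clamp rho u) <= rho.
Proof.
  intros H. unfold clamp, Rmax, Rmin.
  destruct (Rle_dec rho u), (Rle_dec (- rho) _); apply Rabs_le; lra.
Qed.

Lemma clamp_id rho u : Rabs u < rho -> clamp rho u = u.
Proof.
  intros H. apply Rabs_def2 in H. unfold clamp.
  rewrite Rmin_right, Rmax_right by lra. reflexivity.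
Qed.

Lemma clamp_lipschitz rho u v : Rabs (clamp rho u - clamp rho v) <= Rabs (u - v).
Proof.
  unfold clamp, Rmax, Rmin.
  destruct (Rle_dec rho u), (Rle_dec rho v); repeat destruct Rle_dec;
    unfold Rabs; repeat destruct Rcase_abs; lra.
Qed.

Lemma continuity_pt_clamp_sub rho T t : continuity_pt (fun t => clamp rho (T - t)) t.
Proof.
  intros eps Heps. exists eps. split; [exact Heps|]. intros y [_ Hy]. simpl in *.
  unfold R_dist in *. eapply Rle_lt_trans; [apply clamp_lipschitz|].
  replace (T - y - (T - t)) with (- (y - t)) by ring. rewrite Rabs_Ropp. exact Hy.
Qed.

Lemma continuity_pt_PSeries_clamp (a : nat -> R) rho T t : 0 <= rho ->
  Rbar_lt rho (CV_radius a) -> continuity_pt (fun t => PSeries a (clamp rho (T - t))) t.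
Proof.
  intros Hrho Hr.
  apply (continuity_pt_comp (fun t => clamp rho (T - t)) (PSeries a));
    [apply continuity_pt_clamp_sub|].
  apply continuity_pt_filterlim, (ex_derive_continuous (K:=R_AbsRing) (V:=R_NormedModule)).
  eexists. apply is_derive_PSeries.
  apply Rbar_le_lt_trans with (Finite rho); [apply Rabs_clamp_le, Hrho|exact Hr].
Qed.

Lemma derivable_pt_lim_PSeries_clamp (a : nat -> R) rho T t :
  Rabs (T - t) < rho -> Rbar_lt (Rabs (T - t)) (CV_radius a) ->
  derivable_pt_lim (fun t => PSeries a (clamp rho (T - t))) t (- PSeries (PS_derive a) (T - t)).
Proof.
  intros H1 H2. apply is_derive_Reals.
  apply is_derive_ext_loc with (f := fun t => PSeries a (T - t)).
  - assert (Hpos : 0 < rho - Rabs (T - t)) by lra.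
    exists (mkposreal _ Hpos). intros y Hy. rewrite clamp_id; [reflexivity|].
    change (Rabs (y - t) < rho - Rabs (T - t)) in Hy.
    replace (T - y) with ((T - t) - (y - t)) by ring.
    eapply Rle_lt_trans; [apply Rabs_triang|]. rewrite Rabs_Ropp. lra.
  - apply is_derive_Reals. rewrite <- (Rmult_1_r (PSeries (PS_derive a) (T - t))).
    rewrite Ropp_mult_distr_r.
    apply (derivable_pt_lim_comp (fun t => T - t) (PSeries a)).
    + replace (- (1)) with (0 - 1) by ring.
      apply derivable_pt_lim_minus; [apply derivable_pt_lim_const|apply derivable_pt_lim_id].
    + apply is_derive_Reals, is_derive_PSeries, H2.
Qed.

Section TimeSolution.
Variables (n : nat) (lam mu : vec) (C Cinv : mat) (kappa T : R).

Definition sol_radius : R := / coef_ratio n lam mu C Cinv kappa / 2.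
Let rho := sol_radius.

Definition sol_A (t : R) : mat := riccati_A n lam mu C Cinv kappa (clamp rho (T - t)).
Definition sol_b (t : R) : vec := riccati_b n lam mu C Cinv kappa (clamp rho (T - t)).

Lemma sol_radius_pos : 0 < rho.
Proof.
  unfold rho, sol_radius. pose proof (coef_ratio_ge1 n lam mu C Cinv kappa).
  apply Rmult_lt_0_compat; [apply Rinv_0_lt_compat|]; lra.
Qed.

Lemma inside_radius u : Rabs u <= rho -> Rabs u < / coef_ratio n lam mu C Cinv kappa.
Proof.
  pose proof sol_radius_pos. unfold rho, sol_radius in *. lra.
Qed.

Lemma sol_A_continuous t i j : (i < n)%nat -> (j < n)%nat ->
  continuity_pt (fun s => sol_A s i j) t.
Proof.
  intros Hi Hj. pose proof sol_radius_pos.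
  apply continuity_pt_PSeries_clamp; [lra|].
  replace (Finite rho) with (Finite (Rabs rho)) by (rewrite Rabs_pos_eq by lra; reflexivity).
  apply (riccati_A_series n lam mu C Cinv kappa rho (inside_radius rho ltac:(rewrite Rabs_pos_eq; lra))
           j Hj i Hi).
Qed.

Lemma sol_b_continuous t i : (i < n)%nat -> continuity_pt (fun s => sol_b s i) t.
Proof.
  intros Hi. pose proof sol_radius_pos.
  apply continuity_pt_PSeries_clamp; [lra|].
  replace (Finite rho) with (Finite (Rabs rho)) by (rewrite Rabs_pos_eq by lra; reflexivity).
  apply (riccati_b_series n lam mu C Cinv kappa rho (inside_radius rho ltac:(rewrite Rabs_pos_eq; lra))
           i Hi).
Qed.

Section Derivatives.
Variables (t : R) (Ht : 0 <= t <= T) (HT : T < rho).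

Lemma remaining_time_small : Rabs (T - t) < rho.
Proof. rewrite Rabs_pos_eq; lra. Qed.

Lemma sol_at t' : Rabs (T - t') < rho ->
  sol_A t' = riccati_A n lam mu C Cinv kappa (T - t') /\ sol_b t' = riccati_b n lam mu C Cinv kappa (T - t').
Proof. intros H. unfold sol_A, sol_b. rewrite clamp_id by exact H. split; reflexivity. Qed.

Lemma sol_A_derive i j : (i < n)%nat -> (j < n)%nat ->
  derivable_pt_lim (fun s => sol_A s i j) t (- rhs_M n lam C Cinv kappa (sol_A t) i j).
Proof.
  intros Hi Hj. pose proof remaining_time_small as Hs.
  pose proof (inside_radius (T - t) ltac:(lra)) as Hr.
  rewrite (proj1 (sol_at t Hs)).
  rewrite <- (is_pseries_unique _ _ _ (riccati_A_derive_series n lam mu C Cinv kappa _ Hr i j Hi Hj)).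
  apply derivable_pt_lim_PSeries_clamp; [exact Hs|].
  apply (riccati_A_series n lam mu C Cinv kappa _ Hr j Hj i Hi).
Qed.

Lemma sol_b_derive i : (i < n)%nat ->
  derivable_pt_lim (fun s => sol_b s i) t (- rhs_v n lam mu C Cinv kappa (sol_A t) (sol_b t) i).
Proof.
  intros Hi. pose proof remaining_time_small as Hs.
  pose proof (inside_radius (T - t) ltac:(lra)) as Hr.
  destruct (sol_at t Hs) as [-> ->].
  rewrite <- (is_pseries_unique _ _ _ (riccati_b_derive_series n lam mu C Cinv kappa _ Hr i Hi)).
  apply derivable_pt_lim_PSeries_clamp; [exact Hs|].
  apply (riccati_b_series n lam mu C Cinv kappa _ Hr i Hi).
Qed.

End Derivatives.

Lemma sol_at_final : sol_A T = (fun _ _ => 0) /\ sol_b T = (fun _ => 0).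
Proof.
  unfold sol_A, sol_b, riccati_A, riccati_b. rewrite Rminus_eq_0, clamp_id
    by (rewrite Rabs_R0; apply sol_radius_pos).
  split; repeat (apply functional_extensionality; intro);
    rewrite PSeries_0; reflexivity.
Qed.

End TimeSolution.

Lemma continuity_pt_fsum n (f : nat -> R -> R) t :
  (forall k, (k < n)%nat -> continuity_pt (f k) t) -> continuity_pt (fun s => fsum n (fun k => f k s)) t.
Proof.
  induction n as [|n IH]; intros H; simpl.
  - apply continuity_pt_const. intros a b. reflexivity.
  - apply (continuity_pt_plus (fun s => fsum n (fun k => f k s)) (f n));
      [apply IH; intros|]; apply H; lia.
Qed.

Lemma continuity_pt_bilin n G (u v : R -> vec) t :
  (forall p, (p < n)%nat -> continuity_pt (fun s => u s p) t) ->
  (forall q, (q < n)%nat -> continuity_pt (fun s => v s q) t) ->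
  continuity_pt (fun s => bilin n G (u s) (v s)) t.
Proof.
  intros Hu Hv. apply continuity_pt_fsum; intros p Hp. apply continuity_pt_fsum; intros q Hq.
  apply (continuity_pt_mult (fun s => u s p * G p q) (fun s => v s q)); [|auto].
  apply (continuity_pt_mult (fun s => u s p) (fun _ => G p q)); [auto|].
  apply continuity_pt_const. intros a b. reflexivity.
Qed.

Lemma continuity_pt_trmul n G (A : R -> mat) t :
  (forall i j, (i < n)%nat -> (j < n)%nat -> continuity_pt (fun s => A s i j) t) ->
  continuity_pt (fun s => trmul n G (A s)) t.
Proof.
  intros HA. apply continuity_pt_fsum; intros i Hi. apply continuity_pt_fsum; intros j Hj.
  apply (continuity_pt_mult (fun _ => G i j) (fun s => A s j i)); [|auto].
  apply continuity_pt_const. intros a b. reflexivity.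
Qed.

Section Integral.
Variables (g : R -> R) (Hg : forall z, continuity_pt g z).

Lemma Riemann_integrable_continuous a b : Riemann_integrable g a b.
Proof.
  destruct (Rle_dec a b).
  - apply continuity_implies_RiemannInt; auto.
  - apply RiemannInt_P1, continuity_implies_RiemannInt; [lra|auto].
Qed.

Lemma derivable_pt_lim_RInt_lower T t : derivable_pt_lim (fun a => RInt g a T) t (- g t).
Proof.
  assert (Hc : forall z, continuous g z) by (intros; apply continuity_pt_filterlim, Hg).
  apply is_derive_Reals, (is_derive_RInt' (V:=R_CompleteNormedModule) g (fun a => RInt g a T) t T).
  - apply filter_forall. intros a. apply RInt_correct, ex_RInt_continuous. intros; apply Hc.
  - apply Hc.
Qed.

End Integral.

Lemma bilin_opp n M u v : bilin n (fun i j => - M i j) u v = - bilin n M u v.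
Proof.
  unfold bilin. rewrite <- fsum_opp.
  apply fsum_ext; intros i _. rewrite <- fsum_opp. apply fsum_ext; intros; ring.
Qed.

Lemma quad_opp_add n M v d c x :
  quad n (fun i j => - M i j) (fun i => - v i) d x + quad n M v c x = d + c.
Proof.
  unfold quad. rewrite bilin_opp.
  replace (dot n (fun i => - v i) x) with (- dot n v x); [ring|].
  unfold dot. rewrite <- fsum_opp. apply fsum_ext; intros; ring.
Qed.

Section Residual.
Variables (n : nat) (lam mu : vec) (C Cinv : mat) (kappa : R).
Variables (A : R -> mat) (b : R -> vec) (c : R -> R).

Lemma hj_residual_quad_fun t x dc :
  (forall i j, (i < n)%nat -> (j < n)%nat ->
     derivable_pt_lim (fun s => A s i j) t (- rhs_M n lam C Cinv kappa (A t) i j)) ->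
  (forall i, (i < n)%nat ->
     derivable_pt_lim (fun s => b s i) t (- rhs_v n lam mu C Cinv kappa (A t) (b t) i)) ->
  derivable_pt_lim c t dc ->
  let S := quad_fun n A b c in
  dtime S t x + (kappa + 1) / 2 * bilin n C (grad S t x) (grad S t x)
  + (kappa + 1) * dot n (drift lam mu x) (grad S t x)
  + kappa / 2 * bilin n Cinv (drift lam mu x) (drift lam mu x)
  = dc + rhs_c n lam mu C Cinv kappa (b t).
Proof.
  intros HA Hb Hc. cbv zeta.
  assert (Hgrad : forall i, (i < n)%nat -> grad (quad_fun n A b c) t x i = aff n (hatM (A t)) (b t) x i)
    by (intros; apply grad_quad_fun; assumption).
  unfold dtime. rewrite (deriv_eq _ _ _ (derivable_pt_lim_quad_fun_time n A b c t x _ _ _ HA Hb Hc)).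
  rewrite (bilin_ext n C _ (aff n (hatM (A t)) (b t) x) _ (aff n (hatM (A t)) (b t) x) Hgrad Hgrad).
  replace (dot n (drift lam mu x) (grad (quad_fun n A b c) t x))
    with (dot n (drift lam mu x) (aff n (hatM (A t)) (b t) x))
    by (apply fsum_ext; intros i Hi; rewrite Hgrad by exact Hi; reflexivity).
  rewrite <- (quad_opp_add n (rhs_M n lam C Cinv kappa (A t))
    (rhs_v n lam mu C Cinv kappa (A t) (b t)) dc (rhs_c n lam mu C Cinv kappa (b t)) x).
  rewrite <- (hj_terms_quad n lam mu C Cinv kappa (A t) (b t) x). simpl. ring.
Qed.

End Residual.

Section Solution.
Variables (n : nat) (lam mu : vec) (C Cinv : mat) (kappa T : R).
Hypothesis HT : 0 < T < sol_radius n lam mu C Cinv kappa.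

Let A := sol_A n lam mu C Cinv kappa T.
Let b := sol_b n lam mu C Cinv kappa T.

Definition sol_trace (s : R) : R := trmul n C (hatM (sol_A n lam mu C Cinv kappa T s)).
Definition sol_c (t : R) : R :=
  RInt (fun s => rhs_c n lam mu C Cinv kappa (sol_b n lam mu C Cinv kappa T s)) t T.
Definition sol_S0 : R -> vec -> R := quad_fun n A b sol_c.

Lemma sol_trace_continuous z : continuity_pt sol_trace z.
Proof.
  apply continuity_pt_trmul. intros i j Hi Hj. unfold hatM.
  apply (continuity_pt_plus (fun s => A s i j) (fun s => A s j i)); apply sol_A_continuous; assumption.
Qed.

Lemma rhs_c_sol_continuous z : continuity_pt (fun s => rhs_c n lam mu C Cinv kappa (b s)) z.
Proof.
  assert (Hb : forall p, (p < n)%nat -> continuity_pt (fun s => b s p) z)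
    by (intros; apply sol_b_continuous; assumption).
  assert (Hcst : forall p, continuity_pt (fun _ : R => drift_cst lam mu p) z)
    by (intros p; apply continuity_pt_const; intros ? ?; reflexivity).
  unfold rhs_c.
  repeat apply continuity_pt_plus; apply continuity_pt_mult;
    try (apply continuity_pt_const; intros ? ?; reflexivity);
    apply continuity_pt_bilin; auto.
Qed.

Lemma sol_ansatz_hj c dc :
  (forall t, 0 <= t <= T -> derivable_pt_lim c t (dc t)) -> c T = 0 ->
  regular n T (quad_fun n A b c) /\ (forall x, quad_fun n A b c T x = 0) /\
  forall t x, 0 <= t <= T ->
    let S := quad_fun n A b c in
    dtime S t x + (kappa + 1) / 2 * bilin n C (grad S t x) (grad S t x)
    + (kappa + 1) * dot n (drift lam mu x) (grad S t x)
    + kappa / 2 * bilin n Cinv (drift lam mu x) (drift lam mu x)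
    = dc t + rhs_c n lam mu C Cinv kappa (b t).
Proof.
  intros Hc HcT.
  assert (HA : forall t, 0 <= t <= T -> forall i j, (i < n)%nat -> (j < n)%nat ->
     derivable_pt_lim (fun s => A s i j) t (- rhs_M n lam C Cinv kappa (A t) i j))
    by (intros; apply sol_A_derive; lra || assumption).
  assert (Hb : forall t, 0 <= t <= T -> forall i, (i < n)%nat ->
     derivable_pt_lim (fun s => b s i) t (- rhs_v n lam mu C Cinv kappa (A t) (b t) i))
    by (intros; apply sol_b_derive; lra || assumption).
  split; [|split].
  - apply regular_quad_fun. intros t x Ht.
    exists (quad n (fun i j => - rhs_M n lam C Cinv kappa (A t) i j)
                 (fun i => - rhs_v n lam mu C Cinv kappa (A t) (b t) i) (dc t) x).
    apply derivable_pt_lim_quad_fun_time; auto.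
  - intros x. unfold quad_fun, A, b.
    destruct (sol_at_final n lam mu C Cinv kappa T) as [-> ->]. rewrite HcT. apply quad_0.
  - intros t x Ht. apply hj_residual_quad_fun; auto.
Qed.

Lemma sol_c_derive t : derivable_pt_lim sol_c t (- rhs_c n lam mu C Cinv kappa (b t)).
Proof. apply derivable_pt_lim_RInt_lower, rhs_c_sol_continuous. Qed.

Lemma sol_c_final : sol_c T = 0.
Proof. apply (RInt_point (V:=R_CompleteNormedModule)). Qed.

Lemma sol_S0_HJ0 : HJ0 n C Cinv lam mu kappa T sol_S0.
Proof.
  destruct (sol_ansatz_hj sol_c (fun t => - rhs_c n lam mu C Cinv kappa (b t)))
    as [Hreg [HT0 Hres]]; [intros; apply sol_c_derive|exact sol_c_final|].
  split; [exact Hreg|split; [exact HT0|]].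
  intros t x Ht. pose proof (Hres t x Ht) as H. cbv zeta in H. unfold sol_S0. lra.
Qed.

Lemma trmul_hess_sol_S0 s x : trmul n C (hess sol_S0 s x) = sol_trace s.
Proof. apply trmul_hess_quad_fun. Qed.

Lemma sol_S_HJfull S1 : (forall t, S1 t = / 2 * RInt sol_trace t T) ->
  HJfull n C Cinv lam mu kappa T (fun t x => sol_S0 t x + S1 t).
Proof.
  intros HS1.
  set (c t := sol_c t + / 2 * RInt sol_trace t T).
  assert (ES : (fun t x => sol_S0 t x + S1 t) = quad_fun n A b c).
  { apply functional_extensionality; intros t. apply functional_extensionality; intros x.
    unfold sol_S0, quad_fun, quad, c. rewrite HS1. ring. }
  destruct (sol_ansatz_hj c
    (fun t => - rhs_c n lam mu C Cinv kappa (b t) + / 2 * - sol_trace t)) as [Hreg [HT0 Hres]].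
  - intros t _. apply derivable_pt_lim_plus; [apply sol_c_derive|].
    apply derivable_pt_lim_scal, derivable_pt_lim_RInt_lower, sol_trace_continuous.
  - unfold c. rewrite sol_c_final, (RInt_point (V:=R_CompleteNormedModule)). change (0 + / 2 * 0 = 0). ring.
  - rewrite ES. split; [exact Hreg|split; [exact HT0|]].
    intros t x Ht. specialize (Hres t x Ht). cbv zeta in Hres.
    rewrite trmul_hess_quad_fun. change (trmul n C (hatM (A t))) with (sol_trace t). lra.
Qed.

End Solution.

Theorem mainTheorem5 (n : nat) (lam mu : vec) (C Cinv : mat) (kappa : R) :
  posdef n C -> is_inverse n C Cinv -> kappa <> -1 ->
  exists T0 : R, 0 < T0 /\
  forall T : R, 0 < T <= T0 ->
  exists S0 : R -> vec -> R,
    quadratic_in_x n S0 /\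
    HJ0 n C Cinv lam mu kappa T S0 /\
    (* tr(C nabla^2 S0(s,.)) is independent of x *)
    (forall s x y, trmul n C (hess S0 s x) = trmul n C (hess S0 s y)) /\
    (* S1(t) = 1/2 int_t^T tr(C nabla^2 S0(s,.)) ds is well defined *)
    (forall t : R, exists pr : Riemann_integrable
        (fun s => trmul n C (hess S0 s zero_vec)) t T, True) /\
    (forall S1 : R -> R,
      (forall t (pr : Riemann_integrable
                  (fun s => trmul n C (hess S0 s zero_vec)) t T),
         S1 t = / 2 * RiemannInt pr) ->
      HJfull n C Cinv lam mu kappa T (fun t x => S0 t x + S1 t)).
Proof.
  intros _ _ _.
  pose proof (sol_radius_pos n lam mu C Cinv kappa) as Hrho.
  exists (sol_radius n lam mu C Cinv kappa / 2). split; [lra|]. intros T HT.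
  assert (HT' : 0 < T < sol_radius n lam mu C Cinv kappa) by lra.
  exists (sol_S0 n lam mu C Cinv kappa T).
  assert (Htr : (fun s => trmul n C (hess (sol_S0 n lam mu C Cinv kappa T) s zero_vec))
                = sol_trace n lam mu C Cinv kappa T)
    by (apply functional_extensionality; intros s; apply trmul_hess_sol_S0).
  assert (Hint : forall t, Riemann_integrable (sol_trace n lam mu C Cinv kappa T) t T)
    by (intros; apply Riemann_integrable_continuous, sol_trace_continuous).
  split; [|split; [|split; [|split]]].
  - do 3 eexists. intros t x. reflexivity.
  - apply sol_S0_HJ0, HT'.
  - intros s x y. rewrite !trmul_hess_sol_S0. reflexivity.
  - intros t. rewrite Htr. exists (Hint t). exact I.
  - intros S1 HS1. apply sol_S_HJfull; [exact HT'|]. intros t.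
    rewrite Htr in HS1. rewrite (HS1 t (Hint t)), (RInt_Reals _ _ _ (Hint t)). reflexivity.
Qed.
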